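(* Let $x,y\in\mathbb{Q}$ and let $\mathcal{A}$ be the Apollonian disk packing generated by a tricycle whose three disks have signed curvatures $1-y$, $x^2+y^2-y$ and $y$. Then there is a positive integer $N$ such that multiplying all curvatures of the disks of $\mathcal{A}$ by $N$ (i.e. rescaling the packing) yields an integral packing: every disk of the rescaled packing has integer curvature.
   Context: A tricycle is a triple of mutually tangent (generalized) disks (circles or lines, with signed curvatures, a line having curvature $0$ and an enclosing disk having negative curvature). A Descartes configuration is a quadruple of mutually tangent disks, with curvatures satisfying $(a+b+c+d)^2=2(a^2+b^2+c^2+d^2)$. The Apollonian disk packing generated by a tricycle is obtained by recursively completing every tricycle already constructed to a Descartes configuration. The triple $(1-y,\,x^2+y^2-y,\,y)$ is the curvature triple of the tricycle described by the tangency Pauli spinor $(1,\,x+iy)$, i.e. by the two tangency spinors $(1,0)$ and $(x,y)$ issuing from the disk of curvature $y$. *)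

From HB Require Import structures.
From mathcomp Require Import all_boot all_order all_algebra.
From mathcomp Require Import reals.
Set Implicit Arguments. Unset Strict Implicit. Unset Printing Implicit Defensive.
Import Order.TTheory GRing.Theory Num.Theory.
Local Open Scope ring_scope.

Definition descartes {R : realType} (a b c d : R) : Prop :=
  (a + b + c + d) ^+ 2 = 2 * (a ^+ 2 + b ^+ 2 + c ^+ 2 + d ^+ 2).

(* Curvature quadruples of the Descartes configurations constructed in the
   Apollonian packing generated by a tricycle with curvatures (a, b, c):
   - the tricycle is completed to a Descartes configuration;
   - any tricycle already constructed (any three members of a constructed
     Descartes configuration, up to ordering) is completed to a Descartes
     configuration;
   - the ordering of a configuration is irrelevant (closure under the
     generators (12) and (1234) of S_4). *)
Inductive apollonian_config {R : realType} (a b c : R) : R -> R -> R -> R -> Prop :=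
| ac_base d : descartes a b c d -> apollonian_config a b c a b c d
| ac_complete p q r s s' : apollonian_config a b c p q r s ->
    descartes p q r s' -> apollonian_config a b c p q r s'
| ac_swap p q r s : apollonian_config a b c p q r s ->
    apollonian_config a b c q p r s
| ac_rot p q r s : apollonian_config a b c p q r s ->
    apollonian_config a b c q r s p.

Definition packing_curvature {R : realType} (a b c k : R) : Prop :=
  exists p q r, apollonian_config a b c p q r k.

From mathcomp Require Import all_boot all_order all_algebra.
From mathcomp Require Import reals.
From mathcomp Require Import ring lra.
Set Implicit Arguments.
Unset Strict Implicit.
Unset Printing Implicit Defensive.

Import GRing.Theory Num.Theory.
Local Open Scope ring_scope.

(* The Descartes relation is quadratic in the fourth curvature: the two
   completions of a tricycle (p, q, r) are p + q + r +- 2 sqrt(pq + qr + rp),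
   so they sum to 2 (p + q + r).  Hence any set of reals stable under
   (p, q, r, s) |-> 2 (p + q + r) - s, and containing the initial tricycle
   and its two completions, contains every curvature of the packing.  For the
   tricycle (1 - y, x^2 + y^2 - y, y) one has pq + qr + rp = x^2, so its
   completions are 1 + x^2 + y^2 - y +- 2x.  All five curvatures are integral
   polynomials of degree at most 2 in x and y, so with D a common denominator
   of x and y the set (1 / D^2) Z works. *)

Section Descartes.
Variable R : realType.
Implicit Types a b c d p q r s x y : R.

Lemma descartesE a b c d :
  descartes a b c d <-> (d - (a + b + c)) ^+ 2 = 4 * (a * b + b * c + c * a).
Proof. by rewrite /descartes; split=> H; lra. Qed.

Lemma descartes_swap p q r s : descartes p q r s -> descartes q p r s.
Proof. by rewrite /descartes => H; lra. Qed.

Lemma descartes_rot p q r s : descartes p q r s -> descartes q r s p.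
Proof. by rewrite /descartes => H; lra. Qed.

Lemma descartes_other_root p q r s (s' : R) :
  descartes p q r s -> descartes p q r s' ->
  s' = s \/ s' = 2 * (p + q + r) - s.
Proof.
move=> /descartesE Hs /descartesE Hs'.
have /eqP : (s' - (p + q + r)) ^+ 2 = (s - (p + q + r)) ^+ 2 by rewrite Hs Hs'.
rewrite eqf_sqr => /orP[] /eqP E; [left | right]; lra.
Qed.

Lemma descartes_tricycle_roots x y d :
  descartes (1 - y) (x ^+ 2 + y ^+ 2 - y) y d ->
  d = 1 + x ^+ 2 + y ^+ 2 - y + 2 * x \/ d = 1 + x ^+ 2 + y ^+ 2 - y - 2 * x.
Proof.
move=> /descartesE Hd.
have /eqP : (d - (1 + x ^+ 2 + y ^+ 2 - y)) ^+ 2 = (2 * x) ^+ 2 by lra.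
rewrite eqf_sqr => /orP[] /eqP E; [left | right]; lra.
Qed.

Variables (P : R -> Prop) (a b c : R).
Hypothesis P_reflect : forall p q r s,
  P p -> P q -> P r -> P s -> P (2 * (p + q + r) - s).
Hypotheses (Pa : P a) (Pb : P b) (Pc : P c).
Hypothesis P_completion : forall d, descartes a b c d -> P d.

Lemma apollonian_config_inv p q r s : apollonian_config a b c p q r s ->
  [/\ P p, P q, P r, P s & descartes p q r s].
Proof.
elim=> {p q r s}.
- by move=> d Hd; split=> //; apply: P_completion.
- move=> p q r s s' _ [Pp Pq Pr Ps Hs] Hs'; split=> //.
  by case: (descartes_other_root Hs Hs') => ->; last exact: P_reflect.
- by move=> p q r s _ [Pp Pq Pr Ps /descartes_swap].
- by move=> p q r s _ [Pp Pq Pr Ps /descartes_rot].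
Qed.

Lemma packing_curvature_inv k : packing_curvature a b c k -> P k.
Proof. by case=> p [q [r /apollonian_config_inv []]]. Qed.

End Descartes.

Definition scaled_int {R : realType} (N : nat) (t : R) : Prop :=
  exists z : int, N%:R * t = z%:~R.

Lemma scaled_int_reflect (R : realType) (N : nat) (p q r s : R) :
  scaled_int N p -> scaled_int N q -> scaled_int N r -> scaled_int N s ->
  scaled_int N (2 * (p + q + r) - s).
Proof.
move=> [zp Hp] [zq Hq] [zr Hr] [zs Hs]; exists (2 * (zp + zq + zr) - zs).
by rewrite !(rmorphB, rmorphD, rmorphM) /= -Hp -Hq -Hr -Hs; ring.
Qed.

Lemma rat_common_denominator (x y : rat) :
  exists2 D : nat, (0 < D)%N &
    exists u v : int, x = u%:~R / D%:R /\ y = v%:~R / D%:R.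
Proof.
have Dx0 : denq x != 0 by rewrite denq_neq0.
have Dy0 : denq y != 0 by rewrite denq_neq0.
pose D := denq x * denq y.
have D_ge0 : 0 <= D by rewrite mulr_ge0 // ltW.
exists `|D|%N; first by rewrite absz_gt0 mulf_neq0.
exists (numq x * denq y), (numq y * denq x).
rewrite natr_absz ger0_norm // /D.
by split; [rewrite -{1}(divq_num_den x) | rewrite -{1}(divq_num_den y)];
  rewrite !rmorphM /=; field; rewrite ?intr_eq0 ?Dx0 ?Dy0.
Qed.

Section CommonDenominator.
Variables (R : realType) (D : nat) (u v : int).
Hypothesis D_gt0 : (0 < D)%N.

Let X : R := u%:~R / D%:R.
Let Y : R := v%:~R / D%:R.

Let D_neq0 : D%:R != 0 :> R.
Proof. by rewrite pnatr_eq0 -lt0n. Qed.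

Lemma tricycle_scaled_int :
  [/\ scaled_int (D ^ 2) (1 - Y),
      scaled_int (D ^ 2) (X ^+ 2 + Y ^+ 2 - Y) & scaled_int (D ^ 2) Y].
Proof.
split; rewrite /X /Y.
- by exists ((D ^ 2)%:Z - D%:Z * v); field.
- by exists (u ^+ 2 + v ^+ 2 - D%:Z * v); field.
- by exists (D%:Z * v); field.
Qed.

Lemma tricycle_completion_scaled_int d :
  descartes (1 - Y) (X ^+ 2 + Y ^+ 2 - Y) Y d -> scaled_int (D ^ 2) d.
Proof.
case/descartes_tricycle_roots=> ->; rewrite /X /Y.
- by exists ((D ^ 2)%:Z + u ^+ 2 + v ^+ 2 - D%:Z * v + 2 * D%:Z * u); field.
- by exists ((D ^ 2)%:Z + u ^+ 2 + v ^+ 2 - D%:Z * v - 2 * D%:Z * u); field.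
Qed.

Lemma packing_curvature_scaled_int k :
  packing_curvature (1 - Y) (X ^+ 2 + Y ^+ 2 - Y) Y k -> scaled_int (D ^ 2) k.
Proof.
have [Pa Pb Pc] := tricycle_scaled_int.
exact: (packing_curvature_inv (@scaled_int_reflect R _) Pa Pb Pc
  (@tricycle_completion_scaled_int)).
Qed.

End CommonDenominator.

Theorem proposition6 (R : realType) (x y : rat) :
  exists N : nat, (0 < N)%N /\
    forall k : R,
      packing_curvature (ratr (1 - y)) (ratr (x ^+ 2 + y ^+ 2 - y)) (ratr y) k ->
      exists z : int, N%:R * k = z%:~R.
Proof.
have [D D_gt0 [u [v [-> ->]]]] := rat_common_denominator x y.
exists (D ^ 2)%N; split; first by rewrite expn_gt0 D_gt0.
move=> k; rewrite !(rmorphB, rmorphD, rmorphXn, rmorph1, fmorph_div) /=.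
rewrite !(rmorph_int, rmorph_nat).
exact: packing_curvature_scaled_int.
Qed.
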